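(* Let $X$ be a non-empty set and let $I,\Phi:X\to\mathbb{R}$ and $\mu>0$ be such that the function $I-\mu\Phi$ has a global minimum in $X$. Then at least one of the following assertions holds: (a) for each filtering cover $\mathcal{N}$ of $X$ there exists $A\in\mathcal{N}$ such that $$\sup_{\lambda\in\mathbb{R}}\inf_{x\in A}\big(I(x)-\mu(e^{\Phi(x)-\lambda}+\lambda)\big)<\inf_{x\in A}\sup_{\lambda\in\Phi(A)}\big(I(x)-\mu(e^{\Phi(x)-\lambda}+\lambda)\big);$$ (b) for each global minimum $u$ of $I-\mu\Phi$ one has $$I(u)\leq I(x)-\mu\big(e^{\Phi(x)-\Phi(u)}-1\big)$$ for all $x\in X$.
   Context: A family $\mathcal{N}$ of non-empty subsets of $X$ is a filtering cover of $X$ if $\bigcup_{A\in\mathcal{N}}A=X$ and for each $A_1,A_2\in\mathcal{N}$ there is $A_3\in\mathcal{N}$ with $A_1\cup A_2\subseteq A_3$. *)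

From HB Require Import structures.
From mathcomp Require Import all_boot all_order all_algebra.
From mathcomp Require Import all_classical all_reals all_analysis.
Set Implicit Arguments. Unset Strict Implicit. Unset Printing Implicit Defensive.
Import Order.TTheory GRing.Theory Num.Theory.
Local Open Scope classical_set_scope.
Local Open Scope ring_scope.

Definition filtering_cover (X : Type) (N : set (set X)) : Prop :=
  (forall A, N A -> A !=set0) /\
  \bigcup_(A in N) A = setT /\
  (forall A1 A2, N A1 -> N A2 -> exists2 A3, N A3 & A1 `|` A2 `<=` A3).

Definition is_global_min (X : Type) (R : realType) (f : X -> R) (u : X) : Prop :=
  forall x, f u <= f x.

Definition Jfun (X : Type) (R : realType) (I Phi : X -> R) (mu : R)
  (x : X) (l : R) : R :=
  I x - mu * (expR (Phi x - l) + l).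

Definition supinf (X : Type) (R : realType) (I Phi : X -> R) (mu : R)
  (A : set X) : \bar R :=
  ereal_sup [set ereal_inf [set (Jfun I Phi mu x l)%:E | x in A] | l in [set: R]].

Definition infsup (X : Type) (R : realType) (I Phi : X -> R) (mu : R)
  (A : set X) : \bar R :=
  ereal_inf [set ereal_sup [set (Jfun I Phi mu x l)%:E | l in Phi @` A] | x in A].

From HB Require Import structures.
From mathcomp Require Import all_boot all_order all_algebra.
From mathcomp Require Import all_classical all_reals all_analysis.
From mathcomp Require Import ring lra.
Set Implicit Arguments.
Unset Strict Implicit.
Unset Printing Implicit Defensive.

Import Order.TTheory GRing.Theory Num.Theory.
Local Open Scope classical_set_scope.
Local Open Scope ring_scope.

(* Write J(y, l) = I y - mu (e^(Phi y - l) + l) and c = I u - mu (1 + Phi u)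
   for a global minimum u of I - mu Phi.  Since J(y, Phi y) >= c for every y,
   inf_A sup_(Phi A) J >= c on every A.  If (b) fails at x, then
   J(x, Phi u) < c = J(u, Phi u); a convex combination of J(u, .) and J(x, .)
   with a small weight on x, minimised in l, stays below c - d for some d > 0,
   so for every l one of J(u, l), J(x, l) is <= c - d.  Hence sup_l inf_A J < c
   on any A containing u and x, and a filtering cover has such a member. *)

Section RealBounds.
Variable R : realType.

Lemma subr1V_le_ln (c : R) : 0 < c -> 1 - c^-1 <= ln c.
Proof.
move=> c0; have cV0 : -1 < c^-1 - 1 by rewrite ltrBrDr addNr invr_gt0.
have := le_ln1Dx cV0; rewrite addrC subrK lnV ?posrE //; lra.
Qed.

(* The minimum of t |-> c e^t - t, attained at t = - ln c. *)
Lemma lnD1_le_mulexpRB (c t : R) : 0 < c -> 1 + ln c <= c * expR t - t.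
Proof.
move=> c0; have := expR_ge1Dx (t + ln c).
rewrite expRD lnK ?posrE // mulrC; lra.
Qed.

Lemma convex_le_or (w p q r : R) : 0 <= w <= 1 ->
  (1 - w) * p + w * q <= r -> p <= r \/ q <= r.
Proof.
case/andP=> w0; rewrite le_eqVlt => /orP[/eqP -> | w1] hpq.
  by right; lra.
case: (lerP p r) => [|hp]; first by left.
right; rewrite leNgt; apply/negP => hq.
have : 0 < (1 - w) * (p - r) by apply: mulr_gt0; lra.
have : 0 <= w * (q - r) by apply: mulr_ge0; lra.
lra.
Qed.

(* w |-> w p + mu ln (1 + w E) vanishes at 0 with derivative D = p + mu E > 0;
   via ln c >= 1 - 1/c, the weight w = D / (4 mu E^2 + 2 D) is small enough. *)
Lemma exists_ln_gain_gt0 (mu p E : R) : 0 < mu -> -1 < E -> 0 < p + mu * E ->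
  exists2 w, 0 <= w <= 1 & 0 < w * p + mu * ln (1 + w * E).
Proof.
move=> mu0 E1 D0; set D := p + mu * E in D0.
set q := 4 * mu * E ^+ 2 + 2 * D.
have q0 : 0 < q by rewrite /q; have := sqr_ge0 E; nra.
set w := D / q.
have w0 : 0 < w by exact: divr_gt0.
set m := w * (mu * E ^+ 2).
have m0 : 0 <= m by apply: mulr_ge0; [lra | apply: mulr_ge0; [lra | exact: sqr_ge0]].
have wD0 : 0 < w * D by exact: mulr_gt0.
have wq : 4 * m + 2 * (w * D) = D.
  by rewrite -[RHS](mulfVK (lt0r_neq0 q0)) -/w /m /q; ring.
have w_half : w <= 1 / 2 by nra.
set c := 1 + w * E.
have c0 : 0 < c by rewrite /c; nra.
have cV2 : c^-1 <= 2 by rewrite -[2]invrK lef_pV2 ?posrE //; rewrite /c; nra.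
exists w; first by apply/andP; split; lra.
have cVc : c * c^-1 = 1 by rewrite mulfV ?lt0r_neq0.
have gain : w * p + mu * (1 - c^-1) = w * (D - m * c^-1).
  have -> : w * p + mu * (1 - c^-1)
          = w * (D - m * c^-1) + mu * (1 - w * E) * (1 - c * c^-1).
    by rewrite /D /m /c; ring.
  by rewrite cVc subrr mulr0 addr0.
have mc : m * c^-1 <= 2 * m by rewrite mulrC ler_wpM2r.
have := ler_wpM2l (ltW mu0) (subr1V_le_ln c0).
nra.
Qed.

Lemma convex_Jcomb_le (mu a b Iu Ix w l : R) : 0 < mu -> 0 <= w <= 1 ->
  (1 - w) * (Iu - mu * (expR (a - l) + l)) + w * (Ix - mu * (expR (b - l) + l))
  <= Iu - mu * (1 + a)
     - (w * (Iu - Ix) + mu * ln (1 + w * (expR (b - a) - 1))).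
Proof.
move=> mu0 /andP[w0 w1].
set K := expR (b - a); set c := 1 + w * (K - 1).
have K0 : 0 < K := expR_gt0 _.
have c0 : 0 < c by rewrite /c; nra.
have hb : expR (b - l) = K * expR (a - l).
  by rewrite /K -expRD; congr expR; ring.
have := ler_wpM2l (ltW mu0) (lnD1_le_mulexpRB (a - l) c0).
rewrite hb /c; nra.
Qed.

End RealBounds.

Lemma filtering_cover_pair (X : Type) (N : set (set X)) (u x : X) :
  filtering_cover N -> exists2 A, N A & A u /\ A x.
Proof.
move=> [_ [cover directed]].
have [Au NAu Auu] : (\bigcup_(A in N) A) u by rewrite cover.
have [Ax NAx Axx] : (\bigcup_(A in N) A) x by rewrite cover.
have [A NA sA] := directed _ _ NAu NAx.
by exists A => //; split; apply: sA; [left | right].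
Qed.

Section Minimax.
Variables (R : realType) (X : Type) (I Phi : X -> R) (mu : R).

Lemma infsup_ge_min (A : set X) (u : X) :
  is_global_min (fun x => I x - mu * Phi x) u ->
  ((I u - mu * (1 + Phi u))%:E <= infsup I Phi mu A)%E.
Proof.
move=> umin; apply: le_ereal_inf_tmp => _ [y Ay <-].
apply: (@le_trans _ _ (Jfun I Phi mu y (Phi y))%:E).
  by rewrite lee_fin /Jfun subrr expR0; have := umin y; lra.
by apply: ereal_sup_ubound; exists (Phi y) => //; exists y.
Qed.

Hypothesis mu_gt0 : 0 < mu.

Lemma Jfun_uniform_gap (u x : X) :
  I x - mu * (expR (Phi x - Phi u) - 1) < I u ->
  exists2 d, 0 < d & forall l,
    Jfun I Phi mu u l <= I u - mu * (1 + Phi u) - d \/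
    Jfun I Phi mu x l <= I u - mu * (1 + Phi u) - d.
Proof.
move=> hlt; set E := expR (Phi x - Phi u) - 1.
have E1 : -1 < E by rewrite /E ltrBrDr addNr expR_gt0.
have D0 : 0 < I u - I x + mu * E by rewrite /E; lra.
have [w w01 gain] := exists_ln_gain_gt0 mu_gt0 E1 D0.
exists (w * (I u - I x) + mu * ln (1 + w * E)) => // l.
by apply: (convex_le_or w01); exact: convex_Jcomb_le.
Qed.

Lemma supinf_le (A : set X) (r : R) :
  (forall l, exists2 y, A y & Jfun I Phi mu y l <= r) ->
  (supinf I Phi mu A <= r%:E)%E.
Proof.
move=> below; apply: ge_ereal_sup => _ [l _ <-].
have [y Ay Jy] := below l.
by apply: ge_ereal_inf; exists (Jfun I Phi mu y l)%:E; [exists y | rewrite lee_fin].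
Qed.

End Minimax.

Theorem theorem3p6 (R : realType) (X : Type) (x0 : X) (I Phi : X -> R) (mu : R)
  (hmu : 0 < mu)
  (hmin : exists u : X, is_global_min (fun x => I x - mu * Phi x) u) :
  (forall N : set (set X), filtering_cover N ->
     exists2 A, N A & (supinf I Phi mu A < infsup I Phi mu A)%E)
  \/
  (forall u : X, is_global_min (fun x => I x - mu * Phi x) u ->
     forall x : X, I u <= I x - mu * (expR (Phi x - Phi u) - 1)).
Proof.
have [|not_b] := pselect (forall u : X, is_global_min (fun x => I x - mu * Phi x) u ->
     forall x : X, I u <= I x - mu * (expR (Phi x - Phi u) - 1)); first by right.
left => N coverN.
have [u umin [x]] : exists2 u, is_global_min (fun y => I y - mu * Phi y) u &
    exists x, I x - mu * (expR (Phi x - Phi u) - 1) < I u.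
  apply: contra_notP not_b => none u umin x; rewrite leNgt; apply/negP => hlt.
  by apply: none; exists u => //; exists x.
move=> hlt; have [d d0 gap] := Jfun_uniform_gap hmu hlt.
have [A NA [Au Ax]] := filtering_cover_pair u x coverN.
exists A => //; apply: (@le_lt_trans _ _ (I u - mu * (1 + Phi u) - d)%:E).
  by apply: supinf_le => l; case: (gap l) => ?; [exists u | exists x].
apply: lt_le_trans (infsup_ge_min A umin).
by rewrite lte_fin; lra.
Qed.
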